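(* Let $P_{(\pm)}$ be as below and, for $v\in\mathbb C$, set $\hat R_+(v)=I+vP_{(+)}$ and $\hat R_-(v)=I+vP_{(-)}$. If $v,v',v''\in\mathbb C$ satisfy $vv''\neq4$ and $v'=\dfrac{v+v''+vv''}{1-\frac14vv''}$, then $$\hat R_{\pm,(12)}(v)\,\hat R_{\pm,(23)}(v')\,\hat R_{\pm,(12)}(v'')=\hat R_{\pm,(23)}(v'')\,\hat R_{\pm,(12)}(v')\,\hat R_{\pm,(23)}(v)$$ (for each choice of sign, with the same sign throughout).
   Context: $P_{(+)}=\tfrac12\begin{pmatrix}1&0&0&1\\0&0&0&0\\0&0&0&0\\1&0&0&1\end{pmatrix}$, $P_{(-)}=\tfrac12\begin{pmatrix}1&0&0&-1\\0&0&0&0\\0&0&0&0\\-1&0&0&1\end{pmatrix}$, $I$ the $4\times4$ identity. For a $4\times4$ matrix $A$ acting on $\mathbb C^2\otimes\mathbb C^2$ (basis ordered $e_1\otimes e_1,e_1\otimes e_2,e_2\otimes e_1,e_2\otimes e_2$), $A_{(12)}=A\otimes I_2$ and $A_{(23)}=I_2\otimes A$ on $(\mathbb C^2)^{\otimes 3}$. *)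

From HB Require Import structures.
From mathcomp Require Import all_boot all_order all_algebra.
From mathcomp Require Import mxtens.
Set Implicit Arguments. Unset Strict Implicit. Unset Printing Implicit Defensive.
Import Order.TTheory GRing.Theory Num.Theory.
Local Open Scope ring_scope.

(* Complex scalars: C is any numClosedFieldType (the complex numbers are one). *)

(* P_(+) and P_(-) as 4x4 matrices, basis e1(x)e1, e1(x)e2, e2(x)e1, e2(x)e2. *)
Definition Pplus (C : numClosedFieldType) : 'M[C]_4 :=
  \matrix_(i < 4, j < 4) (2^-1 *
    nth 0 (nth [::] ([:: [:: 1; 0; 0; 1];
                         [:: 0; 0; 0; 0];
                         [:: 0; 0; 0; 0];
                         [:: 1; 0; 0; 1]] : seq (seq C)) i) j).

Definition Pminus (C : numClosedFieldType) : 'M[C]_4 :=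
  \matrix_(i < 4, j < 4) (2^-1 *
    nth 0 (nth [::] ([:: [:: 1; 0; 0; -1];
                         [:: 0; 0; 0; 0];
                         [:: 0; 0; 0; 0];
                         [:: -1; 0; 0; 1]] : seq (seq C)) i) j).

Definition Rplus (C : numClosedFieldType) (v : C) : 'M[C]_4 := 1%:M + v *: Pplus C.
Definition Rminus (C : numClosedFieldType) (v : C) : 'M[C]_4 := 1%:M + v *: Pminus C.

(* A_(12) = A (x) I_2 and A_(23) = I_2 (x) A on (C^2)^(x)3 (Kronecker product,
   first factor = most significant index, as in mxtens.tensmx). *)
Definition op12 (C : numClosedFieldType) (A : 'M[C]_4) : 'M[C]_8 :=
  (A *t (1%:M : 'M[C]_2)).
Definition op23 (C : numClosedFieldType) (A : 'M[C]_4) : 'M[C]_8 :=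
  ((1%:M : 'M[C]_2) *t A).

(* P_(+-) = w w^T / 2 for the unnormalised Bell vector w = e1(x)e1 +- e2(x)e2.
   The snake identities (w^T (x) I)(I (x) w) = I = (I (x) w^T)(w (x) I) give the
   Temperley-Lieb relations X^2 = X, XYX = X/4, YXY = Y/4 for X = P_(12) and
   Y = P_(23).  For any such pair, expanding (1 + xX)(1 + yY)(1 + zX) yields
   1 + (x + z + xz + xyz/4) X + y Y + xy XY + yz YX, so the braid relation
   holds exactly when y (1 - xz/4) = x + z + xz. *)

From HB Require Import structures.
From mathcomp Require Import all_boot all_order all_algebra.
From mathcomp Require Import mxtens ssrAC ring.
Set Implicit Arguments.
Unset Strict Implicit.
Unset Printing Implicit Defensive.
Import GRing.Theory Num.Theory.
Local Open Scope ring_scope.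

Section TemperleyLieb.
Variables (R : comPzRingType) (A : algType R) (c : R).

Definition TL_relations (X Y : A) : Prop :=
  [/\ X * X = X, Y * Y = Y, X * Y * X = c *: X & Y * X * Y = c *: Y].

Lemma TL_expand (X Y : A) x y z : X * X = X -> X * Y * X = c *: X ->
  (1 + x *: X) * (1 + y *: Y) * (1 + z *: X) =
  1 + (x + z + x * z + c * x * y * z) *: X + y *: Y
    + (x * y) *: (X * Y) + (y * z) *: (Y * X).
Proof.
move=> XX XYX.
rewrite !(mulrDl, mulrDr, mul1r, mulr1) -!scalerAl -!scalerAr !scalerA.
rewrite -scalerAl scalerA XX XYX scalerA !scalerDl !addrA.
have -> : x * z * y * c = c * x * y * z by ring.
by rewrite [LHS](ACl (1*3*5*7*8*2*4*6)).
Qed.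

Lemma TL_yang_baxter (X Y : A) x y z :
  TL_relations X Y -> y * (1 - c * x * z) = x + z + x * z ->
  (1 + x *: X) * (1 + y *: Y) * (1 + z *: X) =
  (1 + z *: Y) * (1 + y *: X) * (1 + x *: Y).
Proof.
move=> [XX YY XYX YXY] hy.
have coefE : x + z + x * z + c * x * y * z = y by rewrite -hy; ring.
have coefE' : z + x + z * x + c * z * y * x = y by rewrite -[RHS]coefE; ring.
rewrite !TL_expand // coefE coefE' (mulrC z y) (mulrC y x).
by rewrite [RHS](ACl (1*3*2*5*4)).
Qed.

End TemperleyLieb.

Lemma TL_relationsZ (F : fieldType) (A : algType F) (X Y : A) (d : F) :
  d != 0 -> X * X = d *: X -> Y * Y = d *: Y -> X * Y * X = X -> Y * X * Y = Y ->
  TL_relations (d^-1 * d^-1) (d^-1 *: X) (d^-1 *: Y).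
Proof.
move=> d0 XX YY XYX YXY.
by split; rewrite -!scalerAl -!scalerAr -?scalerAl !scalerA
  ?XX ?YY ?XYX ?YXY ?scalerA ?mulfVK.
Qed.

Section TensorLinear.
Variable R : comPzRingType.

Lemma tensmxDl m n p q (A B : 'M[R]_(m, n)) (M : 'M[R]_(p, q)) :
  (A + B) *t M = A *t M + B *t M.
Proof. by apply/matrixP=> i j; rewrite !mxE mulrDl. Qed.

Lemma tensmxDr m n p q (M : 'M[R]_(m, n)) (A B : 'M[R]_(p, q)) :
  M *t (A + B) = M *t A + M *t B.
Proof. by apply/matrixP=> i j; rewrite !mxE mulrDr. Qed.

Lemma tensmxZl m n p q a (A : 'M[R]_(m, n)) (M : 'M[R]_(p, q)) :
  (a *: A) *t M = a *: (A *t M).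
Proof. by apply/matrixP=> i j; rewrite !mxE mulrA. Qed.

Lemma tensmxZr m n p q a (M : 'M[R]_(m, n)) (A : 'M[R]_(p, q)) :
  M *t (a *: A) = a *: (M *t A).
Proof. by apply/matrixP=> i j; rewrite !mxE mulrCA. Qed.

Lemma tensmx11 m n : (1%:M : 'M[R]_m) *t (1%:M : 'M[R]_n) = 1%:M.
Proof.
apply/matrixP=> i j.
case: (mxtens_indexP i) => i1 i2; case: (mxtens_indexP j) => j1 j2.
rewrite tensmxE !mxE (inj_eq (can_inj (@mxtens_indexK _ _))) xpair_eqE.
by rewrite -natrM mulnb.
Qed.

End TensorLinear.

(* e1(x)e1 + s e2(x)e2: coordinates 0 and 3 in the ordering of the basis. *)
Definition bell {R : pzRingType} (s : R) : 'cV[R]_4 :=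
  \col_i (if i == 0 :> nat then 1 else if i == 3 :> nat then s else 0).

Section Bell.
Variables (R : comPzRingType) (s : R).
Hypothesis s2 : s ^+ 2 = 1.

Let I2 : 'M[R]_2 := 1%:M.

Lemma bell_zig : ((bell s)^T *t I2) *m (I2 *t bell s) = 1%:M.
Proof.
apply/matrixP=> i j; rewrite !mxE.
case: i => [[|[|//]] ?]; case: j => [[|[|//]] ?];
  rewrite !big_ord_recr big_ord0 /= !mxE /=;
  by rewrite !(mul0r, mulr0, mul1r, mulr1, addr0, add0r) // -expr2.
Qed.

Lemma bell_zag : (I2 *t (bell s)^T) *m (bell s *t I2) = 1%:M.
Proof.
apply/matrixP=> i j; rewrite !mxE.
case: i => [[|[|//]] ?]; case: j => [[|[|//]] ?];
  rewrite !big_ord_recr big_ord0 /= !mxE /=;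
  by rewrite !(mul0r, mulr0, mul1r, mulr1, addr0, add0r) // -expr2.
Qed.

Lemma bell_norm : (bell s)^T *m bell s = 2%:M.
Proof.
apply/matrixP=> i j; rewrite !mxE !ord1 !big_ord_recr big_ord0 /= !mxE /=.
by rewrite !(mul0r, mulr0, mul1r, mulr1, addr0, add0r) -expr2 s2.
Qed.

Let E : 'M[R]_4 := bell s *m (bell s)^T.

Lemma bell_proj_sqr : E *m E = 2%:R *: E.
Proof. by rewrite /E mulmxA -(mulmxA (bell s)) bell_norm mul_mx_scalar -scalemxAl. Qed.

Lemma tens_bell_proj_l : E *t I2 = (bell s *t I2) *m ((bell s)^T *t I2).
Proof. by rewrite tensmx_mul mulmx1. Qed.

Lemma tens_bell_proj_r : I2 *t E = (I2 *t bell s) *m (I2 *t (bell s)^T).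
Proof. by rewrite tensmx_mul mulmx1. Qed.

Lemma bell_sqr_l : (E *t I2) *m (E *t I2) = 2%:R *: (E *t I2) :> 'M_8.
Proof. by rewrite tensmx_mul bell_proj_sqr mulmx1 tensmxZl. Qed.

Lemma bell_sqr_r : (I2 *t E) *m (I2 *t E) = 2%:R *: (I2 *t E) :> 'M_8.
Proof. by rewrite tensmx_mul bell_proj_sqr mulmx1 tensmxZr. Qed.

Lemma bell_braid_l : (E *t I2) *m (I2 *t E) *m (E *t I2) = E *t I2 :> 'M_8.
Proof.
rewrite tens_bell_proj_l tens_bell_proj_r !mulmxA.
rewrite -(mulmxA (bell s *t I2)) bell_zig mulmx1.
by rewrite -(mulmxA (bell s *t I2)) bell_zag mulmx1.
Qed.

Lemma bell_braid_r : (I2 *t E) *m (E *t I2) *m (I2 *t E) = I2 *t E :> 'M_8.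
Proof.
rewrite tens_bell_proj_l tens_bell_proj_r !mulmxA.
rewrite -(mulmxA (I2 *t bell s)) bell_zag mulmx1.
by rewrite -(mulmxA (I2 *t bell s)) bell_zig mulmx1.
Qed.

End Bell.

Section Projectors.
Variable C : numClosedFieldType.

Lemma Pplus_bell : Pplus C = 2^-1 *: (bell 1 *m (bell 1)^T).
Proof.
apply/matrixP=> i j.
by case: i => [[|[|[|[|//]]]] ?]; case: j => [[|[|[|[|//]]]] ?];
  rewrite !mxE big_ord1 !mxE /=; ring.
Qed.

Lemma Pminus_bell : Pminus C = 2^-1 *: (bell (-1) *m (bell (-1))^T).
Proof.
apply/matrixP=> i j.
by case: i => [[|[|[|[|//]]]] ?]; case: j => [[|[|[|[|//]]]] ?];
  rewrite !mxE big_ord1 !mxE /=; ring.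
Qed.

Lemma op12_shift (A : 'M[C]_4) v : op12 (1%:M + v *: A) = 1%:M + v *: op12 A.
Proof. by rewrite /op12 tensmxDl tensmxZl tensmx11. Qed.

Lemma op23_shift (A : 'M[C]_4) v : op23 (1%:M + v *: A) = 1%:M + v *: op23 A.
Proof. by rewrite /op23 tensmxDr tensmxZr tensmx11. Qed.

Lemma half_bell_TL (s : C) : s ^+ 2 = 1 ->
  TL_relations 4^-1 (op12 (2^-1 *: (bell s *m (bell s)^T)))
                    (op23 (2^-1 *: (bell s *m (bell s)^T))).
Proof.
move=> s2; rewrite /op12 /op23 tensmxZl tensmxZr.
have -> : (4^-1 : C) = 2^-1 * 2^-1 by rewrite -invfM -natrM.
apply: TL_relationsZ; first by rewrite pnatr_eq0.
- exact: bell_sqr_l.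
- exact: bell_sqr_r.
- exact: bell_braid_l.
- exact: bell_braid_r.
Qed.

End Projectors.

Theorem mainTheorem7 (C : numClosedFieldType) (v v' v'' : C) :
  v * v'' != 4 ->
  v' = (v + v'' + v * v'') / (1 - 4^-1 * v * v'') ->
  op12 (Rplus v) *m op23 (Rplus v') *m op12 (Rplus v'')
    = op23 (Rplus v'') *m op12 (Rplus v') *m op23 (Rplus v)
  /\
  op12 (Rminus v) *m op23 (Rminus v') *m op12 (Rminus v'')
    = op23 (Rminus v'') *m op12 (Rminus v') *m op23 (Rminus v).
Proof.
move=> hvv hv'.
have h4 : (4 : C) != 0 by rewrite pnatr_eq0.
have hden : 1 - 4^-1 * v * v'' != 0.
  by rewrite subr_eq0 eq_sym -mulrA -(inj_eq (mulfI h4)) mulVKf // mulr1.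
have hy : v' * (1 - 4^-1 * v * v'') = v + v'' + v * v'' by rewrite hv' divfK.
rewrite /Rplus /Rminus !op12_shift !op23_shift Pplus_bell Pminus_bell.
by split; apply: TL_yang_baxter hy; apply: half_bell_TL; rewrite ?sqrrN expr1n.
Qed.
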